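(* There exists a randomized $O(k^2\log k)$-competitive online algorithm for the generalized $k$-server problem in uniform metrics; that is, there is an absolute constant $C$ such that for every $k\ge 2$ and all uniform metrics $M_1,\dots,M_k$ there is a randomized online algorithm which is $C k^2\log k$-competitive.
   Context: Generalized $k$-server problem in uniform metrics: given uniform metric spaces $M_1,\dots,M_k$, where $M_i$ has $n_i\ge 2$ points at pairwise distance $1$, server $s_i$ starts at a fixed point of $M_i$ and always stays in $M_i$. Requests arrive online as $k$-tuples $(r_1,\dots,r_k)\in\prod_i M_i$; to serve a request an algorithm moves servers so that $s_i$ is at $r_i$ for at least one $i$, before seeing the next request. The cost is the total distance traveled by all servers. A randomized online algorithm $\mathrm{ALG}$ is $\beta$-competitive if there is a constant $\gamma$ (possibly depending on $k$ but not on the request sequence) such that for every input $I$, $\mathbf{E}[\mathrm{ALG}(I)]\le \beta\cdot\mathrm{OPT}(I)+\gamma$, where $\mathrm{OPT}(I)$ is the optimal offline cost. *)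

From HB Require Import structures.
From mathcomp Require Import all_boot all_order all_algebra.
From mathcomp Require Import all_classical all_reals all_analysis.
Set Implicit Arguments. Unset Strict Implicit. Unset Printing Implicit Defensive.
Import Order.TTheory GRing.Theory Num.Theory.
Local Open Scope ring_scope.

(* Generalized k-server in uniform metrics.
   n i = number of points of the uniform metric M_i, points are 'I_(n i).
   A configuration (and also a request) is a k-tuple in prod_i M_i. *)
Definition config (k : nat) (n : 'I_k -> nat) : finType :=
  {dffun forall i : 'I_k, 'I_(n i)}.

(* distance travelled when moving from configuration c to c':
   each server whose position changes travels distance 1 *)
Definition dist (k : nat) (n : 'I_k -> nat) (c c' : config n) : nat :=
  #|[set i : 'I_k | c i != c' i]|.

Definition serves (k : nat) (n : 'I_k -> nat) (c r : config n) : bool :=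
  [exists i : 'I_k, c i == r i].

Fixpoint path_cost (k : nat) (n : 'I_k -> nat) (s0 : config n)
  (cs : seq (config n)) : nat :=
  if cs is c :: cs' then (dist s0 c + path_cost c cs')%N else 0%N.

Definition feasible (k : nat) (n : 'I_k -> nat) (I cs : seq (config n)) : bool :=
  all2 (fun c r => serves c r) cs I.

(* The default value [size I] of the big minimum is irrelevant:
   moving one server per request is feasible with cost <= size I. *)
Definition OPT (k : nat) (n : 'I_k -> nat) (s0 : config n) (I : seq (config n))
  : nat :=
  \big[minn/size I]_(t : (size I).-tuple (config n) | feasible I t)
     path_cost s0 t.

(* A randomized online algorithm (behavioural form): given the requests seen so
   far (including the current one) and its own past configurations (starting
   with the initial one), it outputs a probability distribution over the next
   configuration. *)
Definition ralg (R : realType) (k : nat) (n : 'I_k -> nat) :=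
  seq (config n) -> seq (config n) -> {ffun config n -> R}.

Definition valid_ralg (R : realType) (k : nat) (n : 'I_k -> nat)
  (A : ralg R n) : Prop :=
  (forall hr hc c, 0 <= A hr hc c) /\
  (forall hr hc, \sum_(c : config n) A hr hc c = 1) /\
  (forall hr r hc c, A (rcons hr r) hc c != 0 -> serves c r).

(* Expected total cost of A on the remaining requests [rest], given the
   history of requests [hr] and of own configurations [hc] (current = last). *)
Fixpoint ecost (R : realType) (k : nat) (n : 'I_k -> nat) (A : ralg R n)
  (s0 : config n) (hr hc rest : seq (config n)) : R :=
  if rest is r :: rest' then
    \sum_(c : config n) A (rcons hr r) hc c *
       ((dist (last s0 hc) c)%:R + ecost A s0 (rcons hr r) (rcons hc c) rest')
  else 0.

Definition expected_cost (R : realType) (k : nat) (n : 'I_k -> nat)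
  (A : ralg R n) (s0 : config n) (I : seq (config n)) : R :=
  ecost A s0 [::] [:: s0] I.

Definition competitive (R : realType) (k : nat) (n : 'I_k -> nat)
  (A : ralg R n) (s0 : config n) (beta : R) : Prop :=
  exists gamma : R, forall I : seq (config n),
    expected_cost A s0 I <= beta * (OPT s0 I)%:R + gamma.

From HB Require Import structures.
From mathcomp Require Import all_boot all_order all_algebra.
From mathcomp Require Import all_classical all_reals all_analysis.
From mathcomp Require Import fingroup perm.
From mathcomp Require Import zify lra.
Import Order.TTheory GRing.Theory Num.Theory.
Set Implicit Arguments. Unset Strict Implicit. Unset Printing Implicit Defensive.
Local Open Scope ring_scope.

(* A strategy [s : 'I_k -> 'I_k] guesses the order in which an offline solution
   pins its servers: whenever a request is served by none of the servers
   [s 0, ..., s (d-1)] pinned so far, it pins [s d] at the requested point, and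
   it dies on such a request once all [k] servers are pinned.  A phase is a
   maximal run of requests survived by some strategy; a configuration serving a
   whole phase yields a surviving strategy, so OPT moves at least once per
   phase.  The algorithm follows the first surviving strategy in a uniformly
   random order of the [k^k] strategies and switches only when this leader
   dies.  The leader is uniform among the survivors [A], so it dies with
   probability [(|A| - |A'|)/|A| <= ln |A| - ln |A'|], and a phase has at most
   [1 + ln k^k = 1 + k ln k] expected switches.  Between switches each request
   moves at most one server, which gets pinned, so a switch costs at most [2k]
   in amortized terms.  The random order becomes a behavioural algorithm by
   conditioning on the observed history. *)

Lemma sum_card_fibers (T T' : finType) (S : {set T}) (f : T -> T') :
  (\sum_(c : T') #|[set w in S | f w == c]|)%N = #|S|.
Proof.
rewrite -sum1_card (partition_big f xpredT) //=.
by apply: eq_bigr => c _; rewrite -sum1_card; apply: eq_bigl => w; rewrite inE.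
Qed.

Lemma sumr_indicator (R : numDomainType) (T : finType) (P : pred T) :
  \sum_(x : T) (P x)%:R = #|[set x | P x]|%:R :> R.
Proof.
rewrite (bigID P) /= [X in _ + X]big1 ?addr0; last by move=> x /negbTE ->.
rewrite (eq_bigr (fun _ => 1)); last by move=> x ->.
by rewrite sumr_const; congr (_%:R); apply: eq_card => x; rewrite inE.
Qed.

(** * Uniform mixtures of deterministic algorithms *)

Section UniformMixture.
Variables (R : realType) (k : nat) (n : 'I_k -> nat) (Om : finType).
Variables (alg : Om -> seq (config n) -> seq (config n) -> config n) (s0 : config n).

Fixpoint rev_history (w : Om) (rhr : seq (config n)) : seq (config n) :=
  if rhr is _ :: rhr' then
    let hc := rev_history w rhr' in rcons hc (alg w (rev rhr) hc)
  else [:: s0].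

Definition history w hr := rev_history w (rev hr).

Lemma history_rcons w hr r :
  history w (rcons hr r) = rcons (history w hr) (alg w (rcons hr r) (history w hr)).
Proof. by rewrite /history rev_rcons /= rev_cons revK. Qed.

Definition consistent (hr hc : seq (config n)) : {set Om} :=
  [set w | history w hr == hc].

Lemma consistent_rcons hr r hc c :
  consistent (rcons hr r) (rcons hc c) =
  [set w in consistent hr hc | alg w (rcons hr r) hc == c].
Proof.
by apply/setP => w; rewrite !inE history_rcons eqseq_rcons; case: eqP => [->|].
Qed.

(* Request histories that are empty or produced by no [w] never occur in a
   play; there the mixture outputs an arbitrary point mass. *)
Definition uniform_mixture (w0 : Om) : ralg R n := fun hr hc => [ffun c =>
  if hr is r0 :: hr' then
    let S := consistent (belast r0 hr') hc in
    if #|S| == 0%N then (c == alg w0 hr hc)%:R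
    else #|[set w in S | alg w hr hc == c]|%:R / #|S|%:R
  else (c == s0)%:R].

Lemma uniform_mixture_rcons w0 hr r hc c :
  uniform_mixture w0 (rcons hr r) hc c =
  if #|consistent hr hc| == 0%N then (c == alg w0 (rcons hr r) hc)%:R
  else #|[set w in consistent hr hc | alg w (rcons hr r) hc == c]|%:R
       / #|consistent hr hc|%:R.
Proof. by rewrite /uniform_mixture ffunE; case: hr => [|r0 hr] //=; rewrite belast_rcons. Qed.

Lemma uniform_mixture_valid w0 :
  (forall w hr r hc, serves (alg w (rcons hr r) hc) r) ->
  valid_ralg (uniform_mixture w0).
Proof.
move=> alg_serves; split; [|split].
- move=> hr hc c; case/lastP: hr => [|hr r]; first by rewrite ffunE.
  by rewrite uniform_mixture_rcons; case: ifP.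
- move=> hr hc; case/lastP: hr => [|hr r].
    under eq_bigr do rewrite ffunE.
    by rewrite (bigD1 s0) //= eqxx big1 ?addr0 // => c /negbTE ->.
  under eq_bigr do rewrite uniform_mixture_rcons.
  have [S0|S0] := eqVneq #|consistent hr hc| 0%N.
    rewrite (bigD1 (alg w0 (rcons hr r) hc)) //= eqxx big1 ?addr0 // => c.
    by rewrite eq_sym => /negbTE ->.
  by rewrite -mulr_suml -natr_sum sum_card_fibers mulfV // pnatr_eq0.
- move=> hr r hc c; rewrite uniform_mixture_rcons; case: ifP => _.
    by have [->|] := eqVneq c (alg w0 (rcons hr r) hc); rewrite ?alg_serves ?eqxx.
  have [->|[w]] := set_0Vmem [set w in consistent hr hc | alg w (rcons hr r) hc == c].
    by rewrite cards0 mul0r eqxx.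
  by rewrite inE => /andP[_ /eqP <-].
Qed.

Fixpoint play (w : Om) (hr hc rest : seq (config n)) : seq (config n) :=
  if rest is r :: rest' then
    let c := alg w (rcons hr r) hc in c :: play w (rcons hr r) (rcons hc c) rest'
  else [::].

Lemma ecost_uniform_mixture w0 rest hr hc : (0 < #|consistent hr hc|)%N ->
  ecost (uniform_mixture w0) s0 hr hc rest * #|consistent hr hc|%:R =
  \sum_(w in consistent hr hc) (path_cost (last s0 hc) (play w hr hc rest))%:R.
Proof.
elim: rest hr hc => [|r rest IH] hr hc S_gt0 /=; first by rewrite mul0r big1.
set S := consistent hr hc.
have weight c : uniform_mixture w0 (rcons hr r) hc c * #|S|%:R =
                #|consistent (rcons hr r) (rcons hc c)|%:R.
  rewrite uniform_mixture_rcons -/S (negbTE (lt0n_neq0 S_gt0)) consistent_rcons.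
  by rewrite -mulrA mulVf ?mulr1 // pnatr_eq0 -lt0n.
have fiber c : #|consistent (rcons hr r) (rcons hc c)|%:R *
    ((dist (last s0 hc) c)%:R + ecost (uniform_mixture w0) s0 (rcons hr r) (rcons hc c) rest)
  = \sum_(w in consistent (rcons hr r) (rcons hc c))
      ((dist (last s0 hc) c)%:R
       + (path_cost c (play w (rcons hr r) (rcons hc c) rest))%:R) :> R.
  have [S0|S'_gt0] := posnP #|consistent (rcons hr r) (rcons hc c)|.
    rewrite S0 mul0r big1 // => w wS.
    by move/card0_eq: S0 => /(_ w); rewrite wS.
  rewrite big_split /= mulrDr sumr_const mulr_natl; congr (_ + _).
  by rewrite mulrC IH // last_rcons.
rewrite mulr_suml (partition_big (fun w => alg w (rcons hr r) hc) xpredT) //=.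
apply: eq_bigr => c _; rewrite mulrAC weight fiber.
apply: eq_big => w; first by rewrite consistent_rcons inE.
by rewrite consistent_rcons inE => /andP[_ /eqP ->]; rewrite natrD.
Qed.

End UniformMixture.

Section Distance.
Variables (k : nat) (n : 'I_k -> nat).

Lemma dist_xx (c : config n) : dist c c = 0%N.
Proof. by apply/eqP; rewrite cards_eq0; apply/eqP/finset.setP => i; rewrite !inE eqxx. Qed.

Lemma neq_le_dist (c c' : config n) : (c != c' <= dist c c')%N.
Proof.
have [//|ne] := eqVneq c c'.
rewrite /dist card_gt0; apply/set0Pn.
have [i ci_neq] : exists i, c i != c' i.
  apply/existsP; apply: contraNT ne => /existsPn all_eq; apply/eqP/ffunP => i.
  by move: (all_eq i); rewrite negbK => /eqP.
by exists i; rewrite inE.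
Qed.

Lemma dist_le_k (c c' : config n) : (dist c c' <= k)%N.
Proof. by rewrite /dist (leq_trans (max_card _)) // card_ord. Qed.

End Distance.

(** * The first element in a uniformly random order *)

Lemma head_filter_has (T : Type) (a : pred T) x0 s : has a s -> a (head x0 [seq x <- s | a x]).
Proof. by elim: s => //= x s IH; case: ifP => //= _ /IH. Qed.

Lemma head_filter_sub (T : Type) (a b : pred T) x0 s :
  subpred b a -> has a s -> b (head x0 [seq x <- s | a x]) ->
  head x0 [seq x <- s | b x] = head x0 [seq x <- s | a x].
Proof.
move=> ba; elim: s => //= x s IH.
case ax: (a x) => /=; first by move=> _ bx; rewrite bx.
by move=> has_s b_head; rewrite (contraFF (ba x) ax) IH.
Qed.

Lemma lnB_ge_ratio (R : realType) (a b : R) : 0 < b -> b <= a -> (a - b) / a <= ln a - ln b.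
Proof.
move=> b_gt0 ba; have a_gt0 : 0 < a by apply: lt_le_trans ba.
have -> : (a - b) / a = 1 - b / a by rewrite mulrBl divrr ?unitfE ?gt_eqF.
have := expR_ge1Dx (ln (b / a)).
rewrite lnK ?posrE ?divr_gt0 // ln_div ?posrE //.
lra.
Qed.

Lemma natr_mul_ln_ge1 (R : realType) (k : nat) : (2 <= k)%N -> 1 <= k%:R * ln (k%:R : R).
Proof.
move=> k_ge2; have k_ge1 : (1 : R) <= k%:R by rewrite ler1n; apply: leq_trans k_ge2.
have k_gt0 : (0 : R) < k%:R by apply: lt_le_trans k_ge1.
have := lnB_ge_ratio ltr01 k_ge1; rewrite ln1 subr0 => ratio_le.
have : k%:R * ((k%:R - 1) / k%:R) <= k%:R * ln (k%:R : R) by rewrite ler_pM2l.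
rewrite mulrCA divff ?gt_eqF // mulr1.
have : (2 : R) <= k%:R by rewrite (ler_nat R 2 k).
lra.
Qed.

Section RandomOrder.
Variables (T : finType) (x0 : T).

(* The default [x0] is only returned when [A] is empty. *)
Definition first_in (rho : {perm T}) (A : {set T}) : T :=
  head x0 [seq x <- [seq rho y | y <- enum T] | x \in A].

Lemma has_perm_enum (rho : {perm T}) (A : {set T}) :
  A != finset.set0 -> has (mem A) [seq rho y | y <- enum T].
Proof.
case/set0Pn => x xA; apply/hasP; exists x => //; apply/mapP; exists (rho^-1 x)%g.
  by rewrite mem_enum.
by rewrite permKV.
Qed.

Lemma first_in_mem rho A : A != finset.set0 -> first_in rho A \in A.
Proof. by move=> /(has_perm_enum rho); apply: head_filter_has. Qed.

Lemma first_in_subset rho (A B : {set T}) : B \subset A -> A != finset.set0 ->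
  first_in rho A \in B -> first_in rho B = first_in rho A.
Proof.
move=> /fintype.subsetP BA /(has_perm_enum rho) hasA.
by apply: head_filter_sub => // y /BA.
Qed.

Lemma first_in_mulg_tperm rho (A : {set T}) a a' : a \in A -> a' \in A ->
  A != finset.set0 -> first_in (rho * tperm a a')%g A = tperm a a' (first_in rho A).
Proof.
move=> aA a'A /(has_perm_enum rho); set t := tperm a a'.
have tA y : (t y \in A) = (y \in A).
  by rewrite /t; case: tpermP => [->|->|//]; rewrite ?aA ?a'A.
rewrite /first_in.
have -> : [seq (rho * t)%g y | y <- enum T] = [seq t x | x <- [seq rho y | y <- enum T]].
  by rewrite -map_comp; apply: eq_map => y; rewrite permM.
rewrite filter_map (eq_filter (a2 := mem A)) => [|y]; last by rewrite /= tA.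
by rewrite has_filter; case: seq.filter.
Qed.

Lemma card_first_in_eq (A : {set T}) a : a \in A ->
  (#|[set rho | first_in rho A == a]| * #|A| = #|{perm T}|)%N.
Proof.
move=> aA; have A_neq0 : A != finset.set0 by apply/set0Pn; exists a.
have same_card a' : a' \in A ->
    #|[set rho | first_in rho A == a']| = #|[set rho | first_in rho A == a]|.
  move=> a'A; rewrite -(card_imset _ (mulIg (tperm a a'))).
  apply: eq_card => rho; rewrite inE.
  apply/imsetP/eqP => [[rho']|E].
    by rewrite inE => /eqP E ->; rewrite first_in_mulg_tperm // E tpermR.
  exists (rho * tperm a a')%g; first by rewrite inE first_in_mulg_tperm // E tpermL.
  by rewrite -mulgA tperm2 mulg1.
rewrite -[#|{perm T}|]sum1_card (partition_big (first_in^~ A) (mem A)) /=; last first.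
  by move=> rho _; apply: first_in_mem.
rewrite mulnC -sum_nat_const; apply: eq_bigr => b bA.
by rewrite -(same_card b bA) -sum1_card; apply: eq_bigl => rho; rewrite inE.
Qed.

Lemma card_first_in_mem (A B : {set T}) : B \subset A -> A != finset.set0 ->
  (#|[set rho | first_in rho A \in B]| * #|A| = #|{perm T}| * #|B|)%N.
Proof.
move=> /fintype.subsetP BA A_neq0.
rewrite -sum1_card (partition_big (first_in^~ A) (mem B)) /=; last by move=> rho; rewrite inE.
rewrite big_distrl mulnC -sum_nat_const; apply: eq_bigr => b bB.
rewrite -(card_first_in_eq (BA b bB)); congr (_ * _)%N.
rewrite -sum1_card; apply: eq_bigl => rho.
by rewrite !inE; case: eqP => [->|]; rewrite ?bB ?andbF.
Qed.

Variable R : realType.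

Lemma card_first_in_dies (A A' : {set T}) : A' \subset A -> A' != finset.set0 ->
  #|[set rho | first_in rho A \in A :\: A']|%:R
  <= #|{perm T}|%:R * (ln #|A|%:R - ln #|A'|%:R) :> R.
Proof.
move=> sub A'_neq0; have A_neq0 : A != finset.set0.
  by case/set0Pn: A'_neq0 => x /(fintype.subsetP sub) xA; apply/set0Pn; exists x.
have cardA'_gt0 : (0 : R) < #|A'|%:R by rewrite ltr0n card_gt0.
have cardA_gt0 : (0 : R) < #|A|%:R by rewrite ltr0n card_gt0.
have /(congr1 (fun m => m%:R : R)) := card_first_in_mem (subsetDl A A') A_neq0.
rewrite !natrM cardsD (finset.setIidPr sub) natrB ?subset_leq_card // => E.
have perm_gt0 : (0 : R) < #|{perm T}|%:R by rewrite ltr0n; apply/card_gt0P; exists 1%g.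
rewrite -(ler_pM2r cardA_gt0) E -mulrA ler_pM2l //.
rewrite -ler_pdivrMr // lnB_ge_ratio // ler_nat subset_leq_card //.
Qed.

End RandomOrder.

(** * Pinning strategies and phases *)

Section FollowTheLeader.
Variables (k : nat) (n : 'I_k -> nat) (s0 : config n).

Definition strategy := {ffun 'I_k -> 'I_k}.

Definition id_strategy : strategy := [ffun i => i].

Definition update (g : config n) (i : 'I_k) (r : config n) : config n :=
  [ffun j => if j == i then r j else g j].

Definition pinned (s : strategy) (d : nat) (i : 'I_k) :=
  [exists j : 'I_k, (j < d)%N && (s j == i)].

Definition overlay (s : strategy) (c : config n) (d : nat) (g : config n) : config n :=
  [ffun i => if pinned s d i then g i else c i].

Definition covers (s : strategy) (d : nat) (g r : config n) :=
  [exists j : 'I_k, (j < d)%N && (g (s j) == r (s j))].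

(* In state [Some (d, g)] the servers [s 0, ..., s (d-1)] are pinned at their
   positions in [g]; [None] means that [s] has died. *)
Definition strategy_step (s : strategy) (st : option (nat * config n)) (r : config n) :=
  if st is Some (d, g) then
    if covers s d g r then st
    else if insub d is Some j then Some (d.+1, update g (s j) r) else None
  else None.

Definition strategy_run s ps := foldl (strategy_step s) (Some (0%N, s0)) ps.

Definition survives s ps := strategy_run s ps != None.

Lemma strategy_run_rcons s ps r :
  strategy_run s (rcons ps r) = strategy_step s (strategy_run s ps) r.
Proof. by rewrite /strategy_run foldl_rcons. Qed.

Lemma survives_rcons s ps r : survives s (rcons ps r) -> survives s ps.
Proof. by rewrite /survives strategy_run_rcons; case: strategy_run. Qed.

Lemma strategy_run_depth s ps d g : strategy_run s ps = Some (d, g) -> (d <= k)%N.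
Proof.
elim/last_ind: ps d g => [|ps r IH] d g; first by case=> <-.
rewrite strategy_run_rcons; case E: (strategy_run s ps) => [[d0 g0]|] //=.
case: ifP => _; first by case=> <- _; exact: IH E.
by case: insubP => // j _ <- [<- _].
Qed.

Lemma strategy_run_covers s ps r d g :
  strategy_run s (rcons ps r) = Some (d, g) -> covers s d g r.
Proof.
rewrite strategy_run_rcons; case: (strategy_run s ps) => [[d0 g0]|] //=.
case: ifP => [cov [<- <-] //|_].
case: insubP => // j _ <- [<- <-]; apply/existsP; exists j.
by rewrite ltnSn /= ffunE eqxx.
Qed.

Lemma overlay_idem s c d g : overlay s (overlay s c d g) d g = overlay s c d g.
Proof. by apply/ffunP => i; rewrite !ffunE; case: pinned. Qed.

Lemma overlay0 s c g : overlay s c 0 g = c.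
Proof. by apply/ffunP => i; rewrite ffunE /pinned; case: existsP => // -[]. Qed.

Lemma overlay_serves s c ps r d g :
  strategy_run s (rcons ps r) = Some (d, g) -> serves (overlay s c d g) r.
Proof.
move/strategy_run_covers/existsP => [j /andP[jd /eqP e]].
apply/existsP; exists (s j); rewrite ffunE.
suff -> : pinned s d (s j) by rewrite e.
by apply/existsP; exists j; rewrite jd eqxx.
Qed.

Lemma dist_overlay_succ s c d g (j : 'I_k) r :
  overlay s c d g = c -> val j = d -> (dist c (overlay s c d.+1 (update g (s j) r)) <= 1)%N.
Proof.
move=> c_fixed jd; rewrite /dist -(cards1 (s j)); apply: subset_leq_card.
apply/fintype.subsetP => i; rewrite !inE; apply: contraNT => ne.
rewrite ffunE /pinned; case: existsP => [[j' /andP[j'd /eqP sj']]|_]; last by rewrite eqxx.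
rewrite ffunE (negbTE ne).
have j'd' : (j' < d)%N.
  rewrite ltn_neqAle -ltnS j'd andbT; apply: contraNneq ne => e.
  by rewrite -sj' (_ : j' = j) //; apply: val_inj; rewrite /= e jd.
rewrite -{1}c_fixed ffunE /pinned; case: existsP => [_|[]]; first by rewrite eqxx.
by exists j'; rewrite j'd' sj' eqxx.
Qed.

Definition phase_step (P : seq (config n)) r :=
  if [exists s, survives s (rcons P r)] then rcons P r else [:: r].

Definition phase hr := foldl phase_step [::] hr.

Definition phase_ends hr r := ~~ [exists s, survives s (rcons (phase hr) r)].

Definition survivors hr := [set s | survives s (phase hr)].

Lemma phase_rcons hr r : phase (rcons hr r) = phase_step (phase hr) r.
Proof. by rewrite /phase foldl_rcons. Qed.

Lemma phase_rcons_continues hr r :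
  ~~ phase_ends hr r -> phase (rcons hr r) = rcons (phase hr) r.
Proof. by rewrite phase_rcons /phase_step negbK => ->. Qed.

Lemma phase_rcons_ends hr r : phase_ends hr r -> phase (rcons hr r) = [:: r].
Proof. by rewrite phase_rcons /phase_step => /negbTE ->. Qed.

Lemma phase_rcons_last hr r : exists P, phase (rcons hr r) = rcons P r.
Proof. by rewrite phase_rcons /phase_step; case: ifP; [exists (phase hr)|exists [::]]. Qed.

Hypothesis k_gt0 : (0 < k)%N.

Lemma survives1 s r : survives s [:: r].
Proof.
rewrite /survives /strategy_run /= /strategy_step.
have -> : covers s 0 s0 r = false by rewrite /covers; apply/existsP => -[].
by rewrite insubT.
Qed.

Lemma survivors_neq0 hr : survivors hr != finset.set0.
Proof.
case/lastP: hr => [|hr r]; apply/set0Pn; first by exists id_strategy; rewrite inE.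
rewrite /survivors phase_rcons /phase_step; case: ifP => [/existsP[s surv]|_].
  by exists s; rewrite inE.
by exists id_strategy; rewrite inE survives1.
Qed.

Definition leader (rho : {perm strategy}) hr := first_in id_strategy rho (survivors hr).

Definition leader_state rho hr :=
  odflt (0%N, s0) (strategy_run (leader rho hr) (phase hr)).

Definition follow_leader rho hr hc :=
  overlay (leader rho hr) (last s0 hc) (leader_state rho hr).1 (leader_state rho hr).2.

Lemma leader_survives rho hr : survives (leader rho hr) (phase hr).
Proof. by have := first_in_mem id_strategy rho (survivors_neq0 hr); rewrite inE. Qed.

Lemma follow_leader_serves rho hr r hc : serves (follow_leader rho (rcons hr r) hc) r.
Proof.
have := leader_survives rho (rcons hr r).
rewrite /follow_leader /leader_state /survives; have [P ->] := phase_rcons_last hr r.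
case E: strategy_run => [[d g]|] // _ /=.
exact: overlay_serves E.
Qed.

(** * A lower bound on OPT *)

Lemma covers_prefix (s s' : strategy) d (g r : config n) :
  (forall j : 'I_k, (j < d)%N -> s' j = s j) -> covers s' d g r = covers s d g r.
Proof. by move=> ss'; apply: eq_existsb => j; case: ltnP => //= jd; rewrite ss'. Qed.

Lemma strategy_run_prefix (s s' : strategy) ps d g : strategy_run s ps = Some (d, g) ->
  (forall j : 'I_k, (j < d)%N -> s' j = s j) -> strategy_run s' ps = Some (d, g).
Proof.
elim/last_ind: ps d g => [//|ps r IH] d g.
rewrite !strategy_run_rcons; case E: (strategy_run s ps) => [[d0 g0]|] //=.
case: ifP => [cov [<- <-] ss'|ncov]; first by rewrite (IH _ _ E ss') /= (covers_prefix _ _ ss') cov.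
case: insubP => // j _ jd [<- <-] ss'.
have ss'0 (j' : 'I_k) : (j' < d0)%N -> s' j' = s j' by move=> j'd; rewrite ss' // ltnS ltnW.
by rewrite (IH _ _ E ss'0) /= (covers_prefix _ _ ss'0) ncov -jd valK ss' // jd.
Qed.

Definition set_slot (s : strategy) d (i : 'I_k) : strategy :=
  [ffun j => if val j == d then i else s j].

Lemma set_slot_lt (s : strategy) d i (j : 'I_k) : (j < d)%N -> set_slot s d i j = s j.
Proof. by move=> jd; rewrite ffunE ltn_eqF. Qed.

Lemma set_slot_injective (s : strategy) d i :
  (forall j j' : 'I_k, (j < d)%N -> (j' < d)%N -> s j = s j' -> j = j') ->
  (forall j : 'I_k, (j < d)%N -> s j != i) ->
  forall j j' : 'I_k, (j < d.+1)%N -> (j' < d.+1)%N ->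
    set_slot s d i j = set_slot s d i j' -> j = j'.
Proof.
move=> s_inj s_neq j j' jd j'd; rewrite !ffunE.
have lt_d (m : 'I_k) : (m < d.+1)%N -> val m != d -> (m < d)%N.
  by move=> md m_neq; rewrite ltn_neqAle m_neq -ltnS md.
have [jE|j_neq] := eqVneq (val j) d; have [j'E|j'_neq] := eqVneq (val j') d.
- by move=> _; apply: val_inj; rewrite jE j'E.
- by move=> e; move: (s_neq j' (lt_d j' j'd j'_neq)); rewrite -e eqxx.
- by move=> e; move: (s_neq j (lt_d j jd j_neq)); rewrite e eqxx.
- exact: s_inj (lt_d j jd j_neq) (lt_d j' j'd j'_neq).
Qed.

Lemma serving_config_survives c ps : all (serves c) ps -> exists s d g,
  [/\ strategy_run s ps = Some (d, g),
      forall j : 'I_k, (j < d)%N -> g (s j) = c (s j) &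
      forall j j' : 'I_k, (j < d)%N -> (j' < d)%N -> s j = s j' -> j = j'].
Proof.
elim/last_ind: ps => [_|ps p IH]; first by exists id_strategy, 0%N, s0.
rewrite all_rcons => /andP[/existsP[i /eqP ci] /IH[s [d [g [run_s g_c s_inj]]]]].
case cov: (covers s d g p).
  by exists s, d, g; rewrite strategy_run_rcons run_s /= cov.
have s_neq (j : 'I_k) : (j < d)%N -> s j != i.
  move=> jd; apply: contraFneq cov => sj; subst i; apply/existsP; exists j.
  by rewrite jd g_c // ci eqxx.
have dk : (d < k)%N.
  rewrite ltn_neqAle (strategy_run_depth run_s) andbT; apply/eqP => dk.
  have /injF_bij[f _ fK] : injective s by move=> j j'; apply: s_inj; rewrite dk.
  by move: (s_neq (f i)); rewrite dk ltn_ord fK eqxx => /(_ isT).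
have slot_lt := @set_slot_lt s d i.
exists (set_slot s d i), d.+1, (update g i p); split.
- rewrite strategy_run_rcons (strategy_run_prefix run_s slot_lt) /=.
  by rewrite (covers_prefix _ _ slot_lt) cov (insubT (fun m => m < k)%N dk) ffunE eqxx.
- move=> j; rewrite ltnS leq_eqVlt => /orP[/eqP jd|jd]; rewrite !ffunE /=.
    by rewrite jd eqxx /= eqxx ci.
  by rewrite ltn_eqF //= (negbTE (s_neq j jd)) g_c.
- exact: set_slot_injective.
Qed.

Lemma phase_ends_unserved c hr r : phase_ends hr r -> ~~ all (serves c) (rcons (phase hr) r).
Proof.
move=> /existsPn ends; apply/negP => /serving_config_survives[s [d [g [run_s _ _]]]].
by move: (ends s); rewrite /survives run_s.
Qed.

Fixpoint num_phase_ends (hr rest : seq (config n)) : nat :=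
  if rest is r :: rest' then (phase_ends hr r + num_phase_ends (rcons hr r) rest')%N
  else 0%N.

Lemma num_phase_ends_le_size hr rest : (num_phase_ends hr rest <= size rest)%N.
Proof.
elim: rest hr => //= r rest IH hr.
by rewrite -addn1 addnC leq_add ?IH ?leq_b1.
Qed.

(* A solution currently at [c] still owes a move to the current phase unless [c]
   serves all of it. *)
Lemma num_phase_ends_le_cost rest hr (c : config n) cs : feasible rest cs ->
  (num_phase_ends hr rest <= path_cost c cs + ~~ all (serves c) (phase hr))%N.
Proof.
elim: rest hr c cs => [|r rest IH] hr c [|c' cs] //= /andP[c'r /(IH (rcons hr r) c') le_cost].
rewrite -addnA (leq_trans (leq_add (leqnn _) le_cost)) // !(addnCA _ (path_cost c' cs)) leq_add2l.
have one_le_dist : c != c' -> (1 <= dist c c' + ~~ all (serves c) (phase hr))%N.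
  by move=> neq; rewrite (leq_trans _ (leq_addr _ _)) // (leq_trans _ (neq_le_dist _ _)) // neq.
case ends: (phase_ends hr r) => /=.
- rewrite phase_rcons_ends //= c'r /=.
  have [c_eq|/one_le_dist //] := eqVneq c c'; subst c'.
  by have := phase_ends_unserved c ends; rewrite all_rcons c'r dist_xx => ->.
- rewrite phase_rcons_continues ?ends // all_rcons c'r /=.
  have [<-|/one_le_dist] := eqVneq c c'; first by rewrite dist_xx.
  exact/leq_trans/leq_b1.
Qed.

Lemma num_phase_ends_le_OPT I : (num_phase_ends [::] I <= OPT s0 I)%N.
Proof.
apply: (big_ind (fun m => num_phase_ends [::] I <= m)%N).
- exact: num_phase_ends_le_size.
- by move=> x y ? ?; rewrite leq_min; apply/andP.
- by move=> t /(num_phase_ends_le_cost [::] s0); rewrite addn0.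
Qed.

(** * The cost of following the leader *)

Definition potential rho hr := (k - (leader_state rho hr).1)%N.

Definition switch rho (hr : seq (config n)) r :=
  phase_ends hr r || (leader rho (rcons hr r) != leader rho hr).

Fixpoint num_switches rho (hr rest : seq (config n)) : nat :=
  if rest is r :: rest' then (switch rho hr r + num_switches rho (rcons hr r) rest')%N
  else 0%N.

Definition holds_leader rho hr (c : config n) :=
  overlay (leader rho hr) c (leader_state rho hr).1 (leader_state rho hr).2 = c.

Lemma follow_leader_step rho hr r hc : holds_leader rho hr (last s0 hc) ->
  (dist (last s0 hc) (follow_leader rho (rcons hr r) hc) + potential rho (rcons hr r)
     <= potential rho hr + 2 * k * switch rho hr r)%N.
Proof.
move=> holds; case sw: (switch rho hr r).
  have := dist_le_k (last s0 hc) (follow_leader rho (rcons hr r) hc); rewrite /potential; lia.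
move/negbT/norP: sw => [ends /negPn/eqP same_leader]; rewrite muln0 addn0.
have := leader_survives rho (rcons hr r); move: holds.
rewrite /follow_leader /potential /holds_leader /leader_state same_leader.
rewrite phase_rcons_continues // /survives strategy_run_rcons.
case: (strategy_run (leader rho hr) (phase hr)) => [[d g]|] //=.
case: ifP => [_ -> _|_]; first by rewrite dist_xx add0n.
case: insubP => // j _ jd holds _ /=.
have := dist_overlay_succ r holds jd; have := ltn_ord j; rewrite jd; lia.
Qed.

Lemma holds_leader_follow rho hr r hc :
  holds_leader rho (rcons hr r) (follow_leader rho (rcons hr r) hc).
Proof. exact: overlay_idem. Qed.

Lemma play_follow_leader_cost rho rest hr hc : holds_leader rho hr (last s0 hc) ->
  (path_cost (last s0 hc) (play follow_leader rho hr hc rest)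
     <= potential rho hr + 2 * k * num_switches rho hr rest)%N.
Proof.
elim: rest hr hc => [//|r rest IH] hr hc holds /=.
have := IH (rcons hr r) (rcons hc (follow_leader rho (rcons hr r) hc)).
rewrite last_rcons => /(_ (holds_leader_follow rho hr r hc)).
move=> IHr; rewrite mulnDr addnA (leq_trans (leq_add (leqnn _) IHr)) // addnA leq_add2r.
exact: follow_leader_step.
Qed.

Lemma follow_leader_cost_le rho rest :
  (path_cost s0 (play follow_leader rho [::] [:: s0] rest)
     <= k + 2 * k * num_switches rho [::] rest)%N.
Proof.
have holds0 : holds_leader rho [::] (last s0 [:: s0]) by exact: overlay0.
apply: leq_trans (play_follow_leader_cost rest holds0) _.
by rewrite leq_add2r leq_subr.
Qed.

Lemma survivors_rcons_subset hr r :
  ~~ phase_ends hr r -> survivors (rcons hr r) \subset survivors hr.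
Proof.
move=> ends; apply/fintype.subsetP => s.
by rewrite !inE phase_rcons_continues // => /survives_rcons.
Qed.

Lemma switch_le_leader_dies rho hr r : ~~ phase_ends hr r ->
  (switch rho hr r <= (first_in id_strategy rho (survivors hr)
                        \in survivors hr :\: survivors (rcons hr r)))%N.
Proof.
move=> ends; rewrite /switch (negbTE ends) /= inE first_in_mem ?survivors_neq0 // andbT.
case: (boolP (_ \in survivors (rcons hr r))) => survive /=; last exact: leq_b1.
by rewrite /leader (first_in_subset (survivors_rcons_subset ends)) ?survivors_neq0 ?eqxx.
Qed.

Variable R : realType.

Lemma expected_switch_le hr r :
  \sum_(rho : {perm strategy}) (switch rho hr r)%:R <=
  #|{perm strategy}|%:R * (ln #|survivors hr|%:R - ln #|survivors (rcons hr r)|%:R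
                             + (1 + ln #|strategy|%:R) * (phase_ends hr r)%:R) :> R.
Proof.
have cardA_gt0 h : (0 : R) < #|survivors h|%:R by rewrite ltr0n card_gt0 survivors_neq0.
have lnA_ge0 h : 0 <= ln (#|survivors h|%:R : R).
  by apply: ln_ge0; rewrite ler1n card_gt0 survivors_neq0.
have lnA_le h : ln (#|survivors h|%:R : R) <= ln #|strategy|%:R.
  by rewrite ler_ln ?posrE ?ler_nat ?max_card // (lt_le_trans (cardA_gt0 h)) ?ler_nat ?max_card.
case ends: (phase_ends hr r); last first.
  rewrite mulr0 addr0; apply: le_trans (@card_first_in_dies _ id_strategy R _ _ _ _).
  - rewrite -sumr_indicator ler_sum // => rho _.
    by rewrite ler_nat switch_le_leader_dies ?ends.
  - by rewrite survivors_rcons_subset ?ends.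
  - exact: survivors_neq0.
have switch_le1 rho : (switch rho hr r)%:R <= 1 :> R by rewrite lern1 leq_b1.
apply: le_trans (ler_sum _ (fun rho _ => switch_le1 rho)) _.
rewrite sumr_const -[X in X <= _]mulr1 ler_wpM2l //.
rewrite /= mulr1n mulr1; have := lnA_ge0 hr; have := lnA_le (rcons hr r); lra.
Qed.

Lemma expected_num_switches_le hr rest :
  \sum_(rho : {perm strategy}) (num_switches rho hr rest)%:R <=
  #|{perm strategy}|%:R * (ln #|survivors hr|%:R
                             + (1 + ln #|strategy|%:R) * (num_phase_ends hr rest)%:R) :> R.
Proof.
have lnA_ge0 h : 0 <= ln (#|survivors h|%:R : R).
  by apply: ln_ge0; rewrite ler1n card_gt0 survivors_neq0.
have lnN_ge0 : 0 <= ln (#|strategy|%:R : R).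
  by apply: ln_ge0; rewrite ler1n; apply/card_gt0P; exists id_strategy.
elim: rest hr => [|r rest IH] hr /=.
  by rewrite big1 // mulr0 addr0 mulr_ge0.
under eq_bigr do rewrite natrD.
rewrite big_split /=; apply: le_trans (lerD (expected_switch_le hr r) (IH (rcons hr r))) _.
rewrite -mulrDr ler_wpM2l // natrD mulrDr.
lra.
Qed.

End FollowTheLeader.

Lemma ln_card_strategy (R : realType) k : (0 < k)%N ->
  ln (#|strategy k|%:R : R) = k%:R * ln k%:R.
Proof. by move=> k_gt0; rewrite card_ffun !card_ord natrX lnXn ?ltr0n // mulr_natl. Qed.

Section Competitiveness.
Variables (R : realType) (k : nat) (n : 'I_k -> nat) (s0 : config n).
Hypothesis k_gt0 : (0 < k)%N.

Definition follow_random_leader : ralg R n := uniform_mixture R (follow_leader s0) s0 1%g.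

Lemma follow_random_leader_valid : valid_ralg follow_random_leader.
Proof. exact/uniform_mixture_valid/follow_leader_serves. Qed.

Lemma expected_cost_follow_random_leader I :
  expected_cost follow_random_leader s0 I <=
  k%:R + 2 * k%:R * (k%:R * ln k%:R + (1 + k%:R * ln k%:R) * (OPT s0 I)%:R).
Proof.
have perm_gt0 : (0 < #|{perm strategy k}|)%N by apply/card_gt0P; exists 1%g.
pose N : R := #|{perm strategy k}|%:R.
have N_gt0 : 0 < N by rewrite ltr0n.
have L_ge0 : 0 <= k%:R * ln (k%:R : R).
  by rewrite -(ln_card_strategy R k_gt0) ln_ge0 // ler1n; apply/card_gt0P; exists (id_strategy k).
have cost_le rho : (path_cost s0 (play (follow_leader s0) rho [::] [:: s0] I))%:R
    <= k%:R + 2 * k%:R * (num_switches s0 rho [::] I)%:R :> R.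
  by rewrite -!natrM -natrD ler_nat follow_leader_cost_le.
have switches_le := expected_num_switches_le s0 k_gt0 R [::] I.
have survivors0 : survivors s0 [::] = [set: strategy k] by apply/finset.setP => s; rewrite !inE.
rewrite survivors0 cardsT (ln_card_strategy R k_gt0) in switches_le.
have consistent0 : consistent (follow_leader s0) s0 [::] [:: s0] = [set: {perm strategy k}].
  by apply/finset.setP => rho; rewrite !inE /history /= eqxx.
have := @ecost_uniform_mixture R _ _ _ (follow_leader s0) s0 1%g I [::] [:: s0].
rewrite consistent0 cardsT => /(_ perm_gt0) average.
rewrite /expected_cost -(ler_pM2r N_gt0) average (eq_bigl xpredT) => [|rho]; last by rewrite inE.
apply: le_trans (ler_sum _ (fun rho _ => cost_le rho)) _.
rewrite big_split /=.
have -> : \sum_(rho : {perm strategy k}) k%:R = k%:R * N :> R by rewrite sumr_const mulr_natr.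
rewrite -mulr_sumr [X in _ <= X]mulrDl lerD2l -[X in _ <= X]mulrA ler_wpM2l //.
rewrite mulrC; apply: le_trans switches_le _; rewrite ler_wpM2l // lerD2l ler_wpM2l ?addr_ge0 //.
by rewrite ler_nat num_phase_ends_le_OPT.
Qed.

End Competitiveness.

Theorem corollary7 (R : realType) :
  exists C : R, forall k : nat, (2 <= k)%N ->
  forall n : 'I_k -> nat, (forall i, 2 <= n i)%N ->
  forall s0 : config n,
  exists A : ralg R n, valid_ralg A /\
    competitive A s0 (C * (k%:R) ^+ 2 * ln (k%:R)).
Proof.
exists 4 => k k_ge2 n _ s0; have k_gt0 : (0 < k)%N by apply: leq_trans k_ge2.
exists (follow_random_leader R s0); split; first exact: follow_random_leader_valid.
exists (k%:R + 2 * k%:R * (k%:R * ln k%:R)) => I.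
apply: le_trans (expected_cost_follow_random_leader R s0 k_gt0 I) _.
have -> : 4 * k%:R ^+ 2 * ln k%:R = 4 * k%:R * (k%:R * ln (k%:R : R)) by rewrite expr2 !mulrA.
have := natr_mul_ln_ge1 R k_ge2; set L := k%:R * ln k%:R; set O := (OPT s0 I)%:R => L_ge1.
have : 0 <= k%:R * O * (L - 1) by rewrite !mulr_ge0 ?subr_ge0.
nra.
Qed.
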